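(* Assume the Continuum Hypothesis. Then there is a subspace $X$ of $\mathbb{R}$ which is a Baire space and such that \textsc{Bob} has no winning strategy in $\mathsf{BM}_\mathrm{fin}(X)$.
   Context: A Baire space is a space in which countable intersections of dense open sets are dense. The game $\mathsf{BM}_\mathrm{fin}(X)$: \textsc{Alice} plays a non-empty open set $A_0$; \textsc{Bob} plays a finite collection $\mathcal{B}_0$ of non-empty open subsets of $A_0$; in inning $n+1$, for each $B \in \mathcal{B}_n$ \textsc{Alice} plays a non-empty open set $A_B \subseteq B$, letting $\mathcal{A}_{n+1}=\{A_B : B\in\mathcal{B}_n\}$, and \textsc{Bob} plays a finite collection $\mathcal{B}_{n+1}$ of non-empty open subsets of $\bigcup\mathcal{A}_{n+1}$; \textsc{Bob} wins if $\bigcap_{n}\bigcup\mathcal{B}_n\neq\emptyset$, otherwise \textsc{Alice} wins. *)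

From HB Require Import structures.
From mathcomp Require Import all_boot all_order all_algebra.
From mathcomp Require Import all_classical all_reals.
From mathcomp Require Import topology normedtype.
Import numFieldTopology.Exports.
Set Implicit Arguments. Unset Strict Implicit. Unset Printing Implicit Defensive.
Import Order.TTheory GRing.Theory Num.Theory.
Local Open Scope classical_set_scope.

Definition CH (R : realType) : Prop :=
  forall A : set R, countable A \/ (A #= [set: R])%card.

Section Subspace.
Variables (T : topologicalType) (X : set T).

Definition relopen (U : set T) : Prop := exists V : set T, open V /\ U = X `&` V.

Definition reldense (D : set T) : Prop :=
  forall U, relopen U -> U !=set0 -> (U `&` D) !=set0.

Definition baire_subspace : Prop :=
  forall D : nat -> set T, (forall n, relopen (D n) /\ reldense (D n)) ->
    reldense (\bigcap_n D n).

(* The game BM_fin(X).  Moves of both players are collections of subsets of X.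
   Alice's first move is the singleton collection {A_0}. *)
Definition alice_first (A : set (set T)) : Prop :=
  exists A0, relopen A0 /\ A0 !=set0 /\ A = [set A0].

Definition alice_next (Bn : set (set T)) (A : set (set T)) : Prop :=
  exists f : set T -> set T,
    (forall B, Bn B -> relopen (f B) /\ f B !=set0 /\ f B `<=` B) /\
    A = f @` Bn.

Definition bob_legal (An : set (set T)) (Bn : set (set T)) : Prop :=
  finite_set Bn /\
  forall B, Bn B -> relopen B /\ B !=set0 /\ B `<=` \bigcup_(A in An) A.

(* A strategy for Bob (perfect information): Bob's move is a function of the
   sequence [:: A_0; A_1; ...; A_n] of Alice's moves so far (Bob's own earlier
   moves are determined by these through the strategy). *)
Definition bob_strategy := seq (set (set T)) -> set (set T).

Definition bob_move (sigma : bob_strategy) (a : nat -> set (set T)) (n : nat) :=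
  sigma (mkseq a n.+1).

Definition alice_legal_upto (sigma : bob_strategy) (a : nat -> set (set T))
    (n : nat) : Prop :=
  alice_first (a 0%N) /\
  forall k, (k < n)%N -> alice_next (bob_move sigma a k) (a k.+1).

Definition bob_winning (sigma : bob_strategy) : Prop :=
  forall a : nat -> set (set T),
    (forall n, alice_legal_upto sigma a n -> bob_legal (a n) (bob_move sigma a n)) /\
    ((forall n, alice_legal_upto sigma a n) ->
       (\bigcap_n \bigcup_(B in bob_move sigma a n) B) !=set0).

Definition bob_has_winning_strategy : Prop :=
  exists sigma : bob_strategy, bob_winning sigma.

End Subspace.

From mathcomp Require Import all_boot all_order all_algebra.
From mathcomp Require Import all_classical all_reals.
From mathcomp Require Import topology normedtype sequences lra.
From mathcomp Require wochoice.
Import numFieldTopology.Exports.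
Import Order.TTheory GRing.Theory Num.Theory.
Set Implicit Arguments. Unset Strict Implicit. Unset Printing Implicit Defensive.
Local Open Scope classical_set_scope.
Local Open Scope ring_scope.

(* Under CH, list the codes of the dense open subsets of R along an omega_1-like
   order and pick, for every stage a and every rational ball, a point of the ball
   lying in all dense open sets listed up to stage a (Baire category theorem).
   The set X of these points meets every nonempty open set in an uncountable set,
   while X \ W is countable for every dense open W.  Such an X is a Baire space,
   since countably many countable sets X \ W_n cannot cover an uncountable X `&` V.
   Against a strategy of Bob, Alice answers inning n by the left or the right
   halves of small intervals around points of Bob's finitely many sets, kept away
   from the n-th rational and from one another.  Her 2^omega binary choices then
   force pairwise distinct points won by Bob, all lying in X and outside a dense
   open union of small balls around the rationals, contradicting the countability
   of X \ W. *)

Lemma countable_setU T (A B : set T) :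
  countable A -> countable B -> countable (A `|` B).
Proof.
move=> cA cB; rewrite -bigcup2E.
apply: bigcup_countable; first exact: countableP.
by move=> [|[|i]] _.
Qed.

Lemma first_difference (T : eqType) (f g : nat -> T) : f <> g ->
  exists m, f m != g m /\ forall i, (i < m)%N -> f i = g i.
Proof.
move=> fg; have [|m fgm minm] := @ex_minnP (fun i => f i != g i).
  apply: contrapT => eqfg; apply/fg/funext => i.
  by apply: contrapT => /eqP fgi; apply: eqfg; exists i.
exists m; split => // i im; apply/eqP; apply: contraTT im => /minm.
by rewrite leqNgt.
Qed.

Lemma finite_pos_lower_bound (R : realDomainType) (D : set R) : finite_set D ->
  (forall x, D x -> 0 < x) -> exists2 r, 0 < r & forall x, D x -> r <= x.
Proof.
move=> /finite_seqP[s ->]; elim: s => [|x s IH] pos; first by exists 1.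
have [|r r_gt0 r_le] := IH; first by move=> y ys; apply: pos; rewrite /= inE ys orbT.
exists (Num.min x r); first by rewrite lt_min r_gt0 pos //= mem_head.
by move=> y; rewrite /= inE ge_min => /orP[/eqP->|/r_le->]; rewrite ?lexx ?orbT.
Qed.

Lemma finite_separated (R : realDomainType) (D : set R) : finite_set D ->
  exists2 r, 0 < r & forall x y, D x -> D y -> x != y -> r <= `|x - y|.
Proof.
move=> D_finite; pose P := (D `*` D) `&` [set p | p.1 != p.2].
have dist_finite : finite_set [set `|p.1 - p.2| | p in P].
  exact/finite_image/finite_setIl/finite_setX.
have [|r r_gt0 r_le] := finite_pos_lower_bound dist_finite.
  by move=> _ [p [_ p12] <-]; rewrite normr_gt0 subr_eq0.
by exists r => // x y Dx Dy xy; apply: r_le; exists (x, y).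
Qed.

Lemma codes_uncountable : ~ countable [set: nat -> bool].
Proof.
move=> /pcard_surjP[g gsurj]; have [m _ gm] := gsurj (fun n => ~~ g n n) I.
by move: (congr1 (@^~ m) gm) => /=; case: (g m m).
Qed.

Section OpenCodes.
Variable R : realType.

Definition rat_ball (k : nat) : set R :=
  if (unpickle k : option (rat * rat)) is Some (c, r)
  then ball (ratr c : R) (ratr r) else set0.

Lemma rat_ball_open k : open (rat_ball k).
Proof.
rewrite /rat_ball; case: unpickle => [[c r]|]; last exact: open0.
exact: (@ball_open _ R^o).
Qed.

Lemma rat_ballP (V : set R) x : open V -> V x ->
  exists k, rat_ball k x /\ rat_ball k `<=` V.
Proof.
move=> oV Vx; have [c [r [xB BV]]] := open_subball_rat oV (mem_set Vx).
by exists (pickle (c, r)); rewrite /rat_ball pickleK; split => //; exact: set_mem.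
Qed.

Definition coded (c : nat -> bool) : set R :=
  \bigcup_(k in [set k | c k]) rat_ball k.

Definition code_of (W : set R) : nat -> bool := fun k => `[< rat_ball k `<=` W >].

Lemma coded_open c : open (coded c).
Proof. by apply: bigcup_open => k _; exact: rat_ball_open. Qed.

Lemma coded_code_sub W : coded (code_of W) `<=` W.
Proof. by move=> x [k /asboolP kW /kW]. Qed.

Lemma coded_code_dense W : open W -> dense W -> dense (coded (code_of W)).
Proof.
move=> oW dW O O0 oO; have [x [Ox Wx]] := dW O O0 oO.
have [k [kx kOW]] := rat_ballP (openI oO oW) (conj Ox Wx).
by exists x; split => //; exists k => //; apply/asboolP => y /kOW[].
Qed.

Definition rat_seq (n : nat) : R := ratr (odflt 0 (unpickle n)).

Lemma rat_seq_dense (O : set R) :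
  open O -> O !=set0 -> exists n, O (rat_seq n).
Proof.
move=> oO O0; have [x [Ox [r _ rx]]] := dense_rat O0 oO.
by exists (pickle r); rewrite /rat_seq pickleK /= rx.
Qed.

End OpenCodes.

Section Ternary.
Variable R : realType.

Definition ternary_partial (f : nat -> bool) (n : nat) : R :=
  \sum_(i < n) (f i)%:R * 3^-1 ^+ i.

Definition ternary (f : nat -> bool) : R := sup (range (ternary_partial f)).

Lemma third_pow_gt0 n : 0 < 3^-1 ^+ n :> R.
Proof. by rewrite exprn_gt0 // invr_gt0. Qed.

Lemma ternary_partialS f n :
  ternary_partial f n.+1 = ternary_partial f n + (f n)%:R * 3^-1 ^+ n.
Proof. by rewrite /ternary_partial big_ord_recr. Qed.

Lemma ternary_partial_tail f m n : (m <= n)%N ->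
  ternary_partial f m <= ternary_partial f n <=
    ternary_partial f m + 3 / 2 * (3^-1 ^+ m - 3^-1 ^+ n).
Proof.
move=> /subnK <-; elim: (n - m)%N => [|k IH].
  by rewrite add0n subrr mulr0 addr0 lexx.
rewrite addSn ternary_partialS exprSr.
have w_gt0 := third_pow_gt0 (k + m).
move: IH; set w := 3^-1 ^+ (k + m); set d : R := (f (k + m))%:R.
have d1 : d <= 1 by rewrite /d; case: (f _); rewrite /= ?lexx ?ler01.
have d0 : 0 <= d := ler0n _ _.
have dw : d * w <= w by rewrite ler_piMl // ltW.
have dw0 : 0 <= d * w := mulr_ge0 d0 (ltW w_gt0).
by move=> /andP[? ?]; apply/andP; split; lra.
Qed.

Lemma ternary_ge_partial f n : ternary_partial f n <= ternary f.
Proof.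
apply: ub_le_sup; last by exists n.
exists (3 / 2) => _ [k _ <-]; have /andP[_] := ternary_partial_tail f (leq0n k).
by rewrite /ternary_partial big_ord0 expr0 add0r; have := third_pow_gt0 k; lra.
Qed.

Lemma ternary_lt f g m : (forall i, (i < m)%N -> f i = g i) ->
  f m = true -> g m = false -> ternary g < ternary f.
Proof.
move=> fg fm gm; set w : R := 3^-1 ^+ m; have w_gt0 : 0 < w := third_pow_gt0 m.
have fgm : ternary_partial f m = ternary_partial g m.
  by apply: eq_bigr => i _; rewrite fg.
have f_lb : ternary_partial f m + w <= ternary f.
  by have := ternary_ge_partial f m.+1; rewrite ternary_partialS fm mul1r.
suff g_ub : ternary g <= ternary_partial g m + w / 2 by lra.
apply: ge_sup; first by exists (ternary_partial g 0), 0%N.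
move=> _ [n _ <-]; case: (leqP n m) => [nm|mn].
  by have /andP[+ _] := ternary_partial_tail g nm; lra.
have /andP[_] := ternary_partial_tail g mn.
rewrite ternary_partialS gm mul0r addr0 exprSr -/w.
by have := third_pow_gt0 n; lra.
Qed.

Lemma ternary_inj : injective ternary.
Proof.
move=> f g fg; apply: contrapT => /first_difference[m [+ below]].
case fm: (f m); case gm: (g m) => // _.
  by have := ternary_lt below fm gm; rewrite fg ltxx.
have below' i : (i < m)%N -> g i = f i by move=> /below.
by have := ternary_lt below' gm fm; rewrite fg ltxx.
Qed.

End Ternary.

Section Omega1.
Variables (T : Type) (S : set T) (le : T -> T -> Prop).

Definition omega1_like : Prop :=
  [/\ forall a b, S a -> S b -> le a b \/ le b a,
      forall a, S a -> countable (S `&` [set b | le b a]) &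
      ~ countable S].

Lemma omega1_like_bounded (Y : set T) :
  omega1_like -> Y `<=` S -> countable Y -> exists2 a, S a & forall b, Y b -> le b a.
Proof.
move=> [le_total seg_countable S_uncountable] YS cY; apply: contrapT => unbounded.
apply/S_uncountable/(sub_countable (subset_card_le _)
  (bigcup_countable cY (fun b Yb => seg_countable b (YS b Yb)))).
move=> a Sa; have [b Yb nba] : exists2 b, Y b & ~ le b a.
  apply: contrapT => bounded; apply: unbounded; exists a => // b Yb.
  by apply: contrapT => nba; apply: bounded; exists b.
by exists b => //; split => //; have [|/nba] := le_total a b Sa (YS b Yb).
Qed.

End Omega1.

Lemma well_ordering (T : eqType) : exists le : T -> T -> Prop,
  [/\ forall x y, le x y \/ le y x,
      forall x y, le x y -> le y x -> x = y &
      forall P : set T, P !=set0 -> exists2 z, P z & forall x, P x -> le z x].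
Proof.
have [le wo] := wochoice.well_ordering_principle T.
have le_chain : wochoice.wo_chain le predT by move=> A _; exact: wo.
exists le; split.
- by move=> x y; apply/orP; exact: (wochoice.wo_chainW le_chain isT isT).
- move=> x y xy yx; apply: (wochoice.wo_chain_antisymmetric le_chain) => //.
  by rewrite xy.
- move=> P [x Px]; have [|z [[/asboolP Pz lbz] _]] := wo [pred y | `[< P y >]].
    by exists x; apply/asboolP.
  by exists z => // y Py; apply: lbz; apply/asboolP.
Qed.

Lemma uncountable_omega1_like (T : eqType) : ~ countable [set: T] ->
  exists (S : set T) (le : T -> T -> Prop), omega1_like S le.
Proof.
move=> T_uncountable; have [le [le_total le_anti le_min]] := well_ordering T.
have [seg_countable|] := pselect (forall a, countable [set b | le b a]).
  exists setT, le; split => [a b _ _|a _|//]; [exact: le_total | by rewrite setTI].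
move=> /existsNP/le_min[z z_uncountable z_min].
exists [set b | le b z /\ b != z], le; split.
- by move=> a b _ _; exact: le_total.
- move=> a [az a_neq_z]; apply: (sub_countable (subset_card_le (@subIsetr _ _ _))).
  apply: contrapT => /z_min za.
  by rewrite (le_anti _ _ az za) eqxx in a_neq_z.
- move=> /(countable_setU (countable1 z)) cU.
  apply/z_uncountable/(sub_countable (subset_card_le _) cU).
  by move=> b bz; have [->|] := eqVneq b z; [left | right].
Qed.

Lemma CH_omega1_codes (R : realType) : CH R ->
  exists (S : set (nat -> bool)) (le : (nat -> bool) -> (nat -> bool) -> Prop)
         (e : (nat -> bool) -> nat -> bool),
    omega1_like S le /\ set_surj S setT e.
Proof.
move=> ch; have [S [le Sw]] := uncountable_omega1_like codes_uncountable.
have [_ _ S_uncountable] := Sw.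
have tinj : injective (@ternary R) := @ternary_inj R.
have img_S : (@ternary R @` S #= S)%card := inj_card_eq (in2W tinj).
have [|img_full] := ch (@ternary R @` S); first by rewrite (eq_countable img_S).
have codes_le_R : ([set: nat -> bool] #<= [set: R])%card.
  by rewrite -(card_le_eql (inj_card_eq (in2W tinj))); exact: card_leT.
have codes_le_S : ([set: nat -> bool] #<= S)%card.
  rewrite -(card_le_eqr img_S) (card_le_eqr img_full); exact: codes_le_R.
by have /pcard_surjP[e e_surj] := codes_le_S; exists S, le, e.
Qed.

(* Stronger than the classical notion: X is also required to be uncountable
   in every nonempty open set. *)
Definition lusin_set (R : realType) (X : set R) : Prop :=
  (forall V, open V -> V !=set0 -> ~ countable (X `&` V)) /\
  (forall W, open W -> dense W -> countable (X `\` W)).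

Section LusinConstruction.
Variables (R : realType) (T : pointedType) (S : set T) (le : T -> T -> Prop).
Variable e : T -> nat -> bool.
Hypotheses (S_omega1 : omega1_like S le) (e_surj : set_surj S setT e).

Local Notation rat_ball := (@rat_ball R).
Local Notation coded := (@coded R).

Definition lusin_candidate (a : T) (k : nat) (x : R) : Prop :=
  rat_ball k x /\ forall b, S b -> le b a -> dense (coded (e b)) -> coded (e b) x.

Definition lusin_point (a : T) (k : nat) : R := xget 0 (lusin_candidate a k).

Lemma lusin_pointP a k : S a -> rat_ball k !=set0 ->
  lusin_candidate a k (lusin_point a k).
Proof.
move=> Sa k0; apply: xgetPex; have [_ seg_countable _] := S_omega1.
have /pcard_surjP[d d_surj] := seg_countable a Sa.
pose F n := if `[< dense (coded (e (d n))) >] then coded (e (d n)) else setT.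
have F_open_dense n : open (F n) /\ dense (F n).
  rewrite /F; case: ifPn => [/asboolP|_]; first by split => //; exact: coded_open.
  by split; [exact: openT | move=> O [x Ox] _; exists x; split].
have [x [kx Fx]] := Baire F_open_dense k0 (@rat_ball_open R k).
exists x; split => // b Sb ba b_dense; have [n _ dnb] := d_surj b (conj Sb ba).
by move: (Fx n I); rewrite /F dnb (asboolT b_dense).
Qed.

Definition lusin_of : set R :=
  [set lusin_point a k | a in S & k in [set k | rat_ball k !=set0]].

Lemma lusin_of_dense_countable W :
  open W -> dense W -> countable (lusin_of `\` W).
Proof.
move=> oW dW; have [_ seg_countable _] := S_omega1.
have [b Sb eb] := @e_surj (code_of W) I.
have stages := countableX (seg_countable b Sb) (countableP [set: nat]).
apply: (sub_countable (subset_card_le _)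
  (sub_countable (card_image_le (fun p => lusin_point p.1 p.2) _) stages)).
move=> _ [[a Sa [k k0 <-]] notW]; exists (a, k) => //; split => //=.
have [le_total _ _] := S_omega1; have [//|ba] := le_total a b Sa Sb.
have [_ /(_ b Sb ba)] := lusin_pointP Sa k0.
by rewrite eb => /(_ (coded_code_dense oW dW))/coded_code_sub.
Qed.

(* Were lusin_of `&` rat_ball k countable, the stages coding R \ {y} for its
   points y would be bounded by some a, and the point chosen at stage a in
   rat_ball k would lie in R \ {itself}. *)
Lemma lusin_of_uncountable V :
  open V -> V !=set0 -> ~ countable (lusin_of `&` V).
Proof.
move=> oV [v Vv] XV_countable; have [k [kv kV]] := rat_ballP oV Vv.
have k0 : rat_ball k !=set0 by exists v.
pose Y := lusin_of `&` rat_ball k.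
have Y_countable : countable Y.
  by apply: sub_countable XV_countable; apply: subset_card_le => y [Xy /kV].
have /choice[idx idxP] :
    forall y : R, exists b, S b /\ e b = code_of (~` [set y]).
  by move=> y; have [b Sb eb] := @e_surj (code_of (~` [set y])) I; exists b.
have [|a Sa a_ub] := omega1_like_bounded (Y := idx @` Y) S_omega1 _
  (sub_countable (card_image_le _ _) Y_countable).
  by move=> _ [y _ <-]; exact: (idxP y).1.
have [ka x_dense] := lusin_pointP Sa k0; set x := lusin_point a k in ka x_dense.
have Yx : Y x by split => //; exists a => //; exists k.
have := x_dense (idx x) (idxP x).1 (a_ub _ (ex_intro2 _ _ _ Yx erefl)).
have x_open : open (~` [set x]).
  exact/closed_openC/accessible_closed_set1/hausdorff_accessible/Rhausdorff.
rewrite (idxP x).2 => /(_ (coded_code_dense x_open (dense_set1C x))).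
by move/coded_code_sub; apply.
Qed.

Lemma omega1_lusin_set : lusin_set lusin_of.
Proof. by split; [exact: lusin_of_uncountable | exact: lusin_of_dense_countable]. Qed.

End LusinConstruction.

Lemma CH_lusin_set (R : realType) : CH R -> exists X : set R, lusin_set X.
Proof.
move=> /CH_omega1_codes[S [le [e [S_omega1 e_surj]]]].
by exists (@lusin_of R _ S le e); exact: omega1_lusin_set.
Qed.

Lemma lusin_set_meets (R : realType) (X V : set R) : lusin_set X ->
  open V -> V !=set0 -> (X `&` V) !=set0.
Proof.
move=> [X_uncountable _] oV V0; apply/set0P/eqP => XV0.
by apply: (X_uncountable _ oV V0); rewrite XV0; exact: countable0.
Qed.

Lemma lusin_baire (R : realType) (X : set R) : lusin_set X -> baire_subspace X.
Proof.
move=> X_lusin D D_open_dense U [V [oV ->]] [u [Xu Vu]].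
have /choice[W WP] : forall n, exists W, open W /\ D n = X `&` W.
  by move=> n; have [[W [oW ->]] _] := D_open_dense n; exists W.
have W_dense n : dense (W n).
  move=> O O0 oO; have XO_open : relopen X (X `&` O) by exists O.
  have [_ /(_ _ XO_open (lusin_set_meets X_lusin oO O0))] := D_open_dense n.
  by rewrite (WP n).2 => -[z [[_ Oz] [_ Wz]]]; exists z.
have bad_countable : countable (\bigcup_n (X `\` W n)).
  apply: bigcup_countable => // n _.
  exact: X_lusin.2 _ (WP n).1 (W_dense n).
have [y [[Xy Vy] good]] : exists y, (X `&` V) y /\ ~ (\bigcup_n (X `\` W n)) y.
  apply: contrapT => all_bad; apply: (X_lusin.1 V oV (ex_intro _ u Vu)).
  apply: sub_countable bad_countable; apply: subset_card_le => y XVy.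
  by apply: contrapT => y_good; apply: all_bad; exists y.
exists y; split => // n _; rewrite (WP n).2; split => //.
by apply: contrapT => nWy; apply: good; exists n.
Qed.

Definition half_interval (R : realType) (right : bool) (c r : R) : set R :=
  if right then `]c, c + r[%classic else `]c - r, c[%classic.

Lemma half_interval_open (R : realType) right (c r : R) :
  open (half_interval right c r).
Proof. by case: right; exact: itv_open. Qed.

Lemma half_interval_neq0 (R : realType) right (c r : R) : 0 < r ->
  half_interval right c r !=set0.
Proof.
move=> r_gt0; exists (if right then c + r / 2 else c - r / 2).
by case: right; rewrite /= in_itv /=; apply/andP; split; lra.
Qed.

Lemma half_intervalP (R : realType) right (c r y : R) :
  half_interval right c r y -> ball c r y /\ (if right then c < y else y < c).
Proof.
rewrite /ball /=; case: right; rewrite /= in_itv /= => /andP[yl yr];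
  by split => //; rewrite ltr_norml; apply/andP; split; lra.
Qed.

Section NoWinningStrategy.
Variables (R : realType) (X : set R).
Hypothesis X_lusin : lusin_set X.

Local Notation rat_seq := (@rat_seq R).

Definition legal_collection (BB : set (set R)) : Prop :=
  finite_set BB /\ forall B, BB B -> relopen X B /\ B !=set0.

Lemma relopen_center (B : set R) q : relopen X B -> B !=set0 ->
  exists c, c != q /\ exists2 r, 0 < r & X `&` ball c r `<=` B.
Proof.
move=> [V [oV ->]] [y [_ Vy]].
have [c [Xc Vc] cq] : exists2 c, (X `&` V) c & c != q.
  apply: contrapT => no_c; apply: (X_lusin.1 V oV (ex_intro _ y Vy)).
  apply: sub_countable (countable1 q); apply: subset_card_le => x XVx.
  by apply: contrapT => xq; apply: no_c; exists x => //; apply/eqP.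
have /nbhs_ballP[r r_gt0 rV] : nbhs c V by apply: open_nbhs_nbhs.
by exists c; split => //; exists r => // x [Xx cx]; split => //; exact: rV.
Qed.

(* Around a point c B of each of Bob's sets B lies an interval of radius r inside
   B; these intervals keep away from q and from each other, so that Alice's choice
   of the left or the right halves of them determines on which side of c B Bob's
   final point lies. *)
Definition splitting (q : R) (BB : set (set R)) (c : set R -> R) (r : R) : Prop :=
  [/\ 0 < r,
      forall B, BB B -> X `&` ball (c B) r `<=` B,
      forall B, BB B -> 2 * r <= `|q - c B| &
      forall B B', BB B -> BB B' -> c B != c B' -> 2 * r <= `|c B - c B'|].

Lemma splitting_ex q BB : legal_collection BB -> exists c r, splitting q BB c r.
Proof.
move=> [BB_finite BB_legal].
have /choice[p pP] : forall B, exists p : R * R,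
    BB B -> [/\ p.1 != q, 0 < p.2 & X `&` ball p.1 p.2 `<=` B].
  move=> B; have [BBB|nBBB] := pselect (BB B); last by exists (0, 0).
  have [B_open B0] := BB_legal B BBB.
  by have [c [cq [r r_gt0 rB]]] := relopen_center q B_open B0; exists (c, r).
pose c B := (p B).1.
have [|r1 r1_gt0 r1_le] :=
    finite_pos_lower_bound (finite_image (fun B => (p B).2) BB_finite).
  by move=> _ [B BBB <-]; have [] := pP B BBB.
have centers_finite : finite_set (q |` c @` BB).
  by rewrite finite_setU; split; [exact: finite_set1 | exact: finite_image].
have [r2 r2_gt0 r2_sep] := finite_separated centers_finite.
have le_r1 : Num.min r1 (r2 / 2) <= r1 by rewrite ge_min lexx.
have le_r2 : Num.min r1 (r2 / 2) <= r2 / 2 by rewrite ge_min lexx orbT.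
have cBB B : BB B -> (q |` c @` BB) (c B) by move=> BBB; right; exists B.
exists c, (Num.min r1 (r2 / 2)); split.
- by rewrite lt_min r1_gt0 divr_gt0.
- move=> B BBB x [Xx cx]; have [_ _ sub] := pP B BBB; apply: sub; split => //.
  by apply: le_ball cx; rewrite (le_trans le_r1) // r1_le //; exists B.
- move=> B BBB; have [cq _ _] := pP B BBB.
  have := r2_sep q (c B) (or_introl erefl) (cBB B BBB).
  by rewrite eq_sym => /(_ cq); lra.
- by move=> B B' BBB BBB' cB; have := r2_sep _ _ (cBB B BBB) (cBB B' BBB') cB; lra.
Qed.

Variable sigma : bob_strategy R.
Hypothesis sigma_winning : bob_winning X sigma.

Definition split_of (n : nat) (BB : set (set R)) : (set R -> R) * R :=
  xget (fun=> 0, 1) [set p | splitting (rat_seq n) BB p.1 p.2].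

Lemma split_ofP n BB : legal_collection BB ->
  splitting (rat_seq n) BB (split_of n BB).1 (split_of n BB).2.
Proof.
move=> /(splitting_ex (rat_seq n))[c [r cr]].
by apply: (@xgetPex _ _ [set p | splitting (rat_seq n) BB p.1 p.2]); exists (c, r).
Qed.

Definition alice_reply (n : nat) (BB : set (set R)) (right : bool) :
    set (set R) :=
  [set X `&` half_interval right ((split_of n BB).1 B) (split_of n BB).2 | B in BB].

Lemma alice_reply_next n BB right : legal_collection BB ->
  alice_next X BB (alice_reply n BB right).
Proof.
move=> /(split_ofP n)[r_gt0 ball_sub _ _].
pose A B := half_interval right ((split_of n BB).1 B) (split_of n BB).2.
exists (fun B => X `&` A B); split => // B BBB /=; split; [|split].
- by exists (A B); split; first exact: half_interval_open.
- apply: (lusin_set_meets X_lusin); first exact: half_interval_open.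
  exact: half_interval_neq0.
- by move=> y [Xy /half_intervalP[cy _]]; apply: ball_sub.
Qed.

Fixpoint history (b : nat -> bool) (n : nat) : seq (set (set R)) :=
  if n is m.+1 then rcons (history b m) (alice_reply m (sigma (history b m)) (b m))
  else [:: [set X]].

Definition alice_play (b : nat -> bool) (n : nat) : set (set R) :=
  nth set0 (history b n) n.

Lemma size_history b n : size (history b n) = n.+1.
Proof. by elim: n => //= n IH; rewrite size_rcons IH. Qed.

Lemma nth_history b n i :
  (i <= n)%N -> nth set0 (history b n) i = alice_play b i.
Proof.
elim: n => [|n IH]; first by rewrite leqn0 => /eqP ->.
rewrite leq_eqVlt => /orP[/eqP -> //|]; rewrite ltnS => i_le_n /=.
by rewrite nth_rcons size_history ltnS i_le_n IH.
Qed.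

Lemma alice_playS b n :
  alice_play b n.+1 = alice_reply n (sigma (history b n)) (b n).
Proof. by rewrite /alice_play /= nth_rcons size_history ltnn eqxx. Qed.

Lemma bob_move_play b n : bob_move sigma (alice_play b) n = sigma (history b n).
Proof.
congr sigma; apply: (@eq_from_nth _ set0); first by rewrite size_mkseq size_history.
by move=> i; rewrite size_mkseq => i_le_n; rewrite nth_mkseq // nth_history.
Qed.

Lemma history_prefix b b' n : (forall i, (i < n)%N -> b i = b' i) ->
  history b n = history b' n.
Proof. by elim: n => //= n IH bb'; rewrite IH ?bb' // => i /ltnW/bb'. Qed.

Lemma bob_legal_collection b n : alice_legal_upto X sigma (alice_play b) n ->
  legal_collection (sigma (history b n)).
Proof.
move=> legal; have [/(_ n legal)] := sigma_winning (alice_play b).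
rewrite bob_move_play => -[BB_finite BB_legal] _.
by split => // B /BB_legal[? []].
Qed.

Lemma alice_play_legal b n : alice_legal_upto X sigma (alice_play b) n.
Proof.
elim: n => [|n [alice_first_move legal]].
  split=> [|//]; exists X; split.
    by exists setT; split; [exact: openT | rewrite setIT].
  have [x [Xx _]] := lusin_set_meets X_lusin openT (ex_intro _ 0 I).
  by split => //; exists x.
split => // k; rewrite ltnS leq_eqVlt => /orP[/eqP->|/legal//].
rewrite bob_move_play alice_playS; apply/alice_reply_next/bob_legal_collection.
by split.
Qed.

Lemma bob_play_legal b n : legal_collection (sigma (history b n)).
Proof. exact/bob_legal_collection/alice_play_legal. Qed.

Definition play_split (b : nat -> bool) (n : nat) : (set R -> R) * R :=
  split_of n (sigma (history b n)).

Lemma play_splitP b n :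
  splitting (rat_seq n) (sigma (history b n)) (play_split b n).1 (play_split b n).2.
Proof. exact/split_ofP/bob_play_legal. Qed.

Lemma play_radius_lower_bound n :
  exists2 r, 0 < r & forall b, r <= (play_split b n).2.
Proof.
have positions_finite : finite_set (range (history^~ n)).
  pose of_tuple (t : n.-tuple bool) := history (nth false t) n.
  apply: sub_finite_set (finite_image of_tuple (@finite_finset _ setT)) => _ [b _ <-].
  have b_size : size (mkseq b n) == n by rewrite size_mkseq.
  exists (Tuple b_size) => //; apply: history_prefix => i i_lt_n /=.
  by rewrite nth_mkseq.
have [|r r_gt0 r_le] := finite_pos_lower_bound
    (finite_image (fun h => (split_of n (sigma h)).2) positions_finite).
  by move=> _ [_ [b _ <-] <-]; have [] := play_splitP b n.
by exists r => // b; apply: r_le; exists (history b n) => //; exists b.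
Qed.

Definition bob_point (b : nat -> bool) : R :=
  xget 0 (\bigcap_n \bigcup_(B in bob_move sigma (alice_play b) n) B).

Lemma bob_pointP b n : (\bigcup_(B in sigma (history b n)) B) (bob_point b).
Proof.
have [_ /(_ (alice_play_legal b))[y y_won]] := sigma_winning (alice_play b).
have := @xgetPex _ 0 _ (ex_intro _ y y_won) n I.
by rewrite bob_move_play.
Qed.

Lemma bob_point_half b n : exists2 B, sigma (history b n) B &
  (X `&` half_interval (b n) ((play_split b n).1 B) (play_split b n).2) (bob_point b).
Proof.
have [B' BB' B'y] := bob_pointP b n.+1.
have [/(_ n.+1 (alice_play_legal b n.+1))[_ bob_sub] _] :=
  sigma_winning (alice_play b).
rewrite bob_move_play in bob_sub; have [_ [_ /(_ _ B'y)]] := bob_sub B' BB'.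
by rewrite alice_playS => -[_ [B BB <-] By]; exists B.
Qed.

Lemma bob_point_in b : X (bob_point b).
Proof. by have [B _ []] := bob_point_half b 0. Qed.

Lemma bob_point_notin_ball b n :
  ~ ball (rat_seq n) (play_split b n).2 (bob_point b).
Proof.
have [B BB [_ /half_intervalP[cy _]]] := bob_point_half b n.
have [_ _ /(_ B BB) qc _] := play_splitP b n.
rewrite /ball /= in cy * => qy.
have := ler_distD (bob_point b) (rat_seq n) ((play_split b n).1 B).
rewrite (distrC (bob_point b)); lra.
Qed.

Lemma bob_point_inj : injective bob_point.
Proof.
move=> b b' bb'; apply: contrapT => /first_difference[m [bm below]].
have [B BB [_ /half_intervalP[yB sB]]] := bob_point_half b m.
have [B' BB' [_ /half_intervalP[yB' sB']]] := bob_point_half b' m.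
rewrite -bb' /play_split -(history_prefix below) -/(play_split b m) in BB' yB' sB'.
have [_ _ _ /(_ B B' BB BB') sep] := play_splitP b m.
move: (play_split b m) => [c r] /= in yB sB yB' sB' sep.
have [cBB'|] := eqVneq (c B) (c B').
  by move: bm sB sB'; rewrite -cBB'; case: (b m); case: (b' m) => // _ ? ?; lra.
move=> /sep; have := ler_distD (bob_point b) (c B) (c B').
by rewrite /ball /= in yB yB'; rewrite (distrC (bob_point b)); lra.
Qed.

Lemma winning_strategy_absurd : False.
Proof.
have /choice[eps epsP] n : exists r, 0 < r /\ forall b, r <= (play_split b n).2.
  by have [r r_gt0 r_le] := play_radius_lower_bound n; exists r.
pose W := \bigcup_n ball (rat_seq n) (eps n).
have W_open : open W by apply: bigcup_open => n _; exact: (@ball_open _ R^o).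
have W_dense : dense W.
  move=> O O0 oO; have [n On] := rat_seq_dense oO O0.
  by exists (rat_seq n); split => //; exists n => //; exact/ballxx/(epsP n).1.
have bob_point_XW b : (X `\` W) (bob_point b).
  split => [|[n _]]; first exact: bob_point_in.
  by move/(le_ball ((epsP n).2 b))/bob_point_notin_ball.
have /countable_injP[h h_inj] := X_lusin.2 W W_open W_dense.
apply/codes_uncountable/countable_injP; exists (h \o bob_point) => b b' _ _ /= hbb'.
by apply/bob_point_inj/h_inj; rewrite ?inE.
Qed.

End NoWinningStrategy.

Lemma lusin_set_no_winning_strategy (R : realType) (X : set R) :
  lusin_set X -> ~ bob_has_winning_strategy X.
Proof. by move=> X_lusin [sigma /(winning_strategy_absurd X_lusin)]. Qed.

Theorem proposition4p10 (R : realType) :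
  CH R ->
  exists X : set R, baire_subspace X /\ ~ bob_has_winning_strategy X.
Proof.
move=> /CH_lusin_set[X X_lusin]; exists X; split.
  exact: lusin_baire.
exact: lusin_set_no_winning_strategy.
Qed.
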